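(* Each of the following families of functions $\omega_k\colon \mathbb{N}_0\to\mathbb{N}$, indexed by $k\in\mathbb{N}$, is a convex growth family: (1) $\omega_k(n)=k^n$; (2) $\omega_k(n)=2^{kn}$; (3) $\omega_k(n)=k^n\cdot n!$; (4) $\omega_k(n)=k^{n^2}$; (5) $\omega_k(n)=k^n (n!)^k$.
   Context: $\mathbb{N}=\{1,2,3,\dots\}$, $\mathbb{N}_0=\mathbb{N}\cup\{0\}$. A family $(\omega_k)_{k\in\mathbb{N}}$ of functions $\omega_k\colon\mathbb{N}_0\to\mathbb{N}$ is a growth family if for all $k\in\mathbb{N}$ and $n,m\in\mathbb{N}_0$: (W1) $\omega_k(0)=1$ and $\omega_k(n)\le\omega_{k+1}(n)$; (W2) $\omega_k(n)\omega_k(m)\le\omega_k(n+m)$; (W3) for every $k_1\in\mathbb{N}$ there is $k_2\ge k_1$ with $\omega_{k_2}(n)\ge 2^n\omega_{k_1}(n)$ for all $n\in\mathbb{N}_0$. A growth family is convex if for every $k_1$ one can choose $k_2\ge k_1$ as in (W3) such that in addition for every $k_3\ge k_2$ there exists $\alpha\in\,]0,1[$ with $\omega_{k_1}(n)^\alpha\omega_{k_3}(n)^{1-\alpha}\le\omega_{k_2}(n)$ for all $n\in\mathbb{N}_0$. *)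

From Stdlib Require Import Reals Arith.
Open Scope R_scope.

(* A family (omega_k)_{k in N}, N = {1,2,...}, of functions N_0 -> N is
   represented by omega : nat -> nat -> nat, where omega k n = omega_k(n);
   only indices k >= 1 are meaningful.  "Codomain N" is the condition
   0 < omega k n. *)

Definition growth_family (omega : nat -> nat -> nat) : Prop :=
  (forall k n, (1 <= k)%nat -> (0 < omega k n)%nat) /\
  (forall k, (1 <= k)%nat -> omega k 0%nat = 1%nat) /\
  (forall k n, (1 <= k)%nat -> (omega k n <= omega (S k) n)%nat) /\
  (forall k n m, (1 <= k)%nat -> (omega k n * omega k m <= omega k (n + m))%nat) /\
  (forall k1, (1 <= k1)%nat -> exists k2, (k1 <= k2)%nat /\
      forall n, (2 ^ n * omega k1 n <= omega k2 n)%nat).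

Definition convex_condition (omega : nat -> nat -> nat) : Prop :=
  forall k1, (1 <= k1)%nat -> exists k2, (k1 <= k2)%nat /\
    (forall n, (2 ^ n * omega k1 n <= omega k2 n)%nat) /\
    (forall k3, (k2 <= k3)%nat -> exists alpha : R, 0 < alpha < 1 /\
       forall n, Rpower (INR (omega k1 n)) alpha
                 * Rpower (INR (omega k3 n)) (1 - alpha)
                 <= INR (omega k2 n)).

Definition convex_growth_family (omega : nat -> nat -> nat) : Prop :=
  growth_family omega /\ convex_condition omega.

Definition omega1 (k n : nat) : nat := k ^ n.
Definition omega2 (k n : nat) : nat := 2 ^ (k * n).
Definition omega3 (k n : nat) : nat := k ^ n * fact n.
Definition omega4 (k n : nat) : nat := k ^ (n * n).
Definition omega5 (k n : nat) : nat := k ^ n * (fact n) ^ k.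

From Stdlib Require Import Reals Arith Lia Lra FunctionalExtensionality.

(* Each of the five families is a pointwise product of factors of the form
   k^(f n) (f = id or f n = n^2), b(n)^k (b = n! or b = 2^n) and n!, and for
   all of them k2 = 2 k1 works in (W3) and in the convexity condition.  With
   alpha = k3/(k3+1), the convexity inequality raised to the power k3+1 becomes
   the integer inequality w(k1)^k3 * w(k3) <= w(2 k1)^(k3+1), which is stable
   under products.  For k^(f n) it is the (f n)-th power of
   k1^k3 * k3 <= (2 k1)^(k3+1); for b(n)^k it compares the exponents
   k1 k3 + k3 <= 2 k1 (k3+1). *)

Lemma Rpower_interpolate (a b c : R) (e : nat) :
  0 < a -> 0 < b -> 0 < c -> a ^ e * b <= c ^ S e ->
  Rpower a (INR e / INR (S e)) * Rpower b (1 - INR e / INR (S e)) <= c.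
Proof.
  intros Ha Hb Hc Habc.
  assert (HSe : 0 < INR (S e)) by (apply lt_0_INR; lia).
  set (t := / INR (S e)).
  assert (Ht : 0 <= t) by (left; apply Rinv_0_lt_compat, HSe).
  replace (1 - INR e / INR (S e)) with t by (unfold t; rewrite S_INR in *; field; lra).
  unfold Rdiv; fold t.
  rewrite <- Rpower_mult, Rpower_pow, Rpower_mult_distr by (try apply pow_lt; assumption).
  assert (Hroot : Rpower (c ^ S e) t = c).
  { rewrite <- (Rpower_pow (S e) c Hc), Rpower_mult.
    unfold t; rewrite Rinv_r by lra. apply Rpower_1, Hc. }
  rewrite <- Hroot. apply Rle_Rpower_l; [exact Ht|].
  split; [apply Rmult_lt_0_compat; [apply pow_lt|]; assumption | exact Habc].
Qed.

Lemma INR_div_succ_bounds (e : nat) : (1 <= e)%nat -> 0 < INR e / INR (S e) < 1.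
Proof.
  intro He. rewrite S_INR.
  assert (H1 : 1 <= INR e) by (apply (le_INR 1); exact He).
  split.
  - apply Rdiv_lt_0_compat; lra.
  - apply (Rmult_lt_reg_r (INR e + 1)); [lra|].
    unfold Rdiv. rewrite Rmult_assoc, Rinv_l by lra. lra.
Qed.

Open Scope nat_scope.

Record convex_factor (w : nat -> nat -> nat) : Prop := {
  factor_pos : forall k n, 1 <= k -> 0 < w k n;
  factor_at0 : forall k, 1 <= k -> w k 0 = 1;
  factor_mono : forall k k' n, 1 <= k <= k' -> w k n <= w k' n;
  factor_supermul : forall k n m, 1 <= k -> w k n * w k m <= w k (n + m);
  factor_interpolate : forall k1 k3 n, 1 <= k1 -> 2 * k1 <= k3 ->
    w k1 n ^ k3 * w k3 n <= w (2 * k1) n ^ S k3 }.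

Definition doubling (w : nat -> nat -> nat) : Prop :=
  forall k n, 1 <= k -> 2 ^ n * w k n <= w (2 * k) n.

Lemma convex_growth_family_of (w : nat -> nat -> nat) :
  convex_factor w -> doubling w -> convex_growth_family w.
Proof.
  intros [Hpos Hat0 Hmono Hmul Hint] Hdbl. split.
  - split; [exact Hpos|]. split; [exact Hat0|].
    split; [intros; apply Hmono; lia|]. split; [exact Hmul|].
    intros k1 Hk1. exists (2 * k1). split; [lia|]. intro n. apply Hdbl, Hk1.
  - intros k1 Hk1. exists (2 * k1). split; [lia|].
    split; [intro n; apply Hdbl, Hk1|].
    intros k3 Hk3. exists (INR k3 / INR (S k3))%R.
    split; [apply INR_div_succ_bounds; lia|].
    intro n. apply Rpower_interpolate; try (apply lt_0_INR, Hpos; lia).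
    rewrite <- !pow_INR, <- mult_INR. apply le_INR, Hint; lia.
Qed.

Lemma convex_factor_mul (w v : nat -> nat -> nat) :
  convex_factor w -> convex_factor v -> convex_factor (fun k n => w k n * v k n).
Proof.
  intros [wpos wat0 wmono wmul wint] [vpos vat0 vmono vmul vint]. split.
  - intros k n Hk. apply Nat.mul_pos_pos; auto.
  - intros k Hk. rewrite wat0, vat0 by exact Hk. reflexivity.
  - intros k k' n Hk. apply Nat.mul_le_mono; auto.
  - intros k n m Hk. rewrite Nat.mul_shuffle1. apply Nat.mul_le_mono; auto.
  - intros k1 k3 n Hk1 Hk3.
    rewrite !Nat.pow_mul_l, Nat.mul_shuffle1. apply Nat.mul_le_mono; auto.
Qed.

Lemma doubling_mul (w v : nat -> nat -> nat) :
  doubling w -> convex_factor v -> doubling (fun k n => w k n * v k n).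
Proof.
  intros Hw Hv k n Hk. rewrite Nat.mul_assoc.
  apply Nat.mul_le_mono; [apply Hw, Hk | apply (factor_mono _ Hv); lia].
Qed.

Lemma pow_mul_le_double_pow (k e : nat) : 1 <= k -> k ^ e * e <= (2 * k) ^ S e.
Proof.
  intro Hk. rewrite Nat.pow_mul_l, (Nat.pow_succ_r' k e).
  pose proof (Nat.pow_gt_lin_r 2 (S e) ltac:(lia)) as He.
  set (x := k ^ e). set (y := 2 ^ S e) in *.
  transitivity (x * y); [apply Nat.mul_le_mono_l; lia | nia].
Qed.

Lemma convex_factor_pow_exponent (f : nat -> nat) :
  f 0 = 0 -> (forall n m, f n + f m <= f (n + m)) ->
  convex_factor (fun k n => k ^ f n).
Proof.
  intros Hf0 Hfadd. split.
  - intros k n Hk. apply Nat.neq_0_lt_0, Nat.pow_nonzero. lia.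
  - intros k _. rewrite Hf0. reflexivity.
  - intros k k' n Hk. apply Nat.pow_le_mono_l. lia.
  - intros k n m Hk. rewrite <- Nat.pow_add_r. apply Nat.pow_le_mono_r; auto. lia.
  - intros k1 k3 n Hk1 _.
    rewrite <- !Nat.pow_mul_r, !(Nat.mul_comm (f n)), !Nat.pow_mul_r, <- Nat.pow_mul_l.
    apply Nat.pow_le_mono_l, pow_mul_le_double_pow, Hk1.
Qed.

Lemma doubling_pow_exponent (f : nat -> nat) :
  (forall n, n <= f n) -> doubling (fun k n => k ^ f n).
Proof.
  intros Hf k n Hk. rewrite Nat.pow_mul_l.
  apply Nat.mul_le_mono_r, Nat.pow_le_mono_r; auto.
Qed.

Record supermultiplicative (b : nat -> nat) : Prop := {
  supermul_at0 : b 0 = 1;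
  supermul_pos : forall n, 0 < b n;
  supermul_le : forall n m, b n * b m <= b (n + m) }.

Lemma fact_supermultiplicative : supermultiplicative fact.
Proof.
  split; [reflexivity | exact lt_O_fact|].
  intros n m. induction n as [|n IH]; [simpl; lia|].
  change (S n * fact n * fact m <= S (n + m) * fact (n + m)).
  rewrite <- Nat.mul_assoc. apply Nat.mul_le_mono; lia.
Qed.

Lemma pow2_supermultiplicative : supermultiplicative (fun n => 2 ^ n).
Proof.
  split; [reflexivity | intro n; apply Nat.neq_0_lt_0, Nat.pow_nonzero; lia|].
  intros n m. rewrite Nat.pow_add_r. reflexivity.
Qed.

Lemma convex_factor_const (b : nat -> nat) :
  supermultiplicative b -> convex_factor (fun _ n => b n).
Proof.
  intros [Hat0 Hpos Hmul]. split; auto.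
  intros k1 k3 n _ _. rewrite Nat.pow_succ_r', Nat.mul_comm. reflexivity.
Qed.

Lemma convex_factor_pow_base (b : nat -> nat) :
  supermultiplicative b -> convex_factor (fun k n => b n ^ k).
Proof.
  intros [Hat0 Hpos Hmul].
  assert (Hb : forall n, b n <> 0) by (intro n; specialize (Hpos n); lia).
  split.
  - intros k n _. apply Nat.neq_0_lt_0, Nat.pow_nonzero, Hb.
  - intros k _. rewrite Hat0. apply Nat.pow_1_l.
  - intros k k' n Hk. apply Nat.pow_le_mono_r; [apply Hb | lia].
  - intros k n m _. rewrite <- Nat.pow_mul_l. apply Nat.pow_le_mono_l, Hmul.
  - intros k1 k3 n Hk1 _.
    rewrite <- !Nat.pow_mul_r, <- Nat.pow_add_r.
    apply Nat.pow_le_mono_r; [apply Hb | nia].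
Qed.

Lemma doubling_pow_base (b : nat -> nat) :
  (forall n, 2 ^ n <= b n) -> doubling (fun k n => b n ^ k).
Proof.
  intros Hb k n Hk.
  assert (H2n : 0 < 2 ^ n) by (apply Nat.neq_0_lt_0, Nat.pow_nonzero; lia).
  replace (2 * k) with (k + k) by lia. rewrite Nat.pow_add_r.
  apply Nat.mul_le_mono_r. transitivity (b n); [apply Hb|].
  rewrite <- (Nat.pow_1_r (b n)) at 1. apply Nat.pow_le_mono_r; [specialize (Hb n) |]; lia.
Qed.

Theorem proposition1p4 :
  convex_growth_family omega1 /\
  convex_growth_family omega2 /\
  convex_growth_family omega3 /\
  convex_growth_family omega4 /\
  convex_growth_family omega5.
Proof.
  pose proof (convex_factor_pow_exponent (fun n => n) eq_refl (fun n m => le_n _)) as Hpow.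
  pose proof (doubling_pow_exponent (fun n => n) (fun n => le_n n)) as Hpow_dbl.
  pose proof (convex_factor_pow_exponent (fun n => n * n) eq_refl ltac:(intros; cbv beta; nia))
    as Hsq.
  pose proof (doubling_pow_exponent (fun n => n * n) ltac:(intros; cbv beta; nia)) as Hsq_dbl.
  pose proof (convex_factor_const _ fact_supermultiplicative) as Hfact.
  pose proof (convex_factor_pow_base _ fact_supermultiplicative) as Hfact_pow.
  assert (Homega2 : omega2 = fun k n => (2 ^ n) ^ k).
  { extensionality k; extensionality n.
    unfold omega2. rewrite Nat.mul_comm. apply Nat.pow_mul_r. }
  split; [|split; [|split; [|split]]].
  - exact (convex_growth_family_of _ Hpow Hpow_dbl).
  - rewrite Homega2. apply convex_growth_family_of.
    + exact (convex_factor_pow_base _ pow2_supermultiplicative).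
    + apply doubling_pow_base. intro n. apply le_n.
  - exact (convex_growth_family_of _ (convex_factor_mul _ _ Hpow Hfact)
             (doubling_mul _ _ Hpow_dbl Hfact)).
  - exact (convex_growth_family_of _ Hsq Hsq_dbl).
  - exact (convex_growth_family_of _ (convex_factor_mul _ _ Hpow Hfact_pow)
             (doubling_mul _ _ Hpow_dbl Hfact_pow)).
Qed.
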